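(* Let $H \in \mathcal{M}_n(\mathbb{R})$ be a (real) positive semidefinite matrix whose least eigenvalue is simple. Then $H$ has exactly $k$ distinct eigenvalues, where $2 \le k \le n$, if and only if there are $k$ distinct real numbers $\mu_1, \ldots, \mu_k$ such that (i) $H - \mu_i I$ is a singular matrix for every $1 \le i \le k-1$; and (ii) $\prod_{i=1}^{k-1}(H - \mu_i I) = \frac{\prod_{i=1}^{k-1}(\mu_k - \mu_i)}{\|\alpha\|^2}\,\alpha\alpha^T$ and $H\alpha = \mu_k\alpha$ for some $\alpha \in \mathbb{R}^n\setminus\{\mathbf{0}\}$. Moreover, in this case $\mu_1, \ldots, \mu_k$ are exactly the $k$ distinct eigenvalues of $H$.
   Context: $I$ is the identity matrix and $\|\alpha\|^2 = \alpha^T\alpha$ is the squared Euclidean norm. A simple eigenvalue is one of algebraic multiplicity $1$. *)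

From HB Require Import structures.
From mathcomp Require Import all_boot all_order all_algebra.
From mathcomp Require Import all_classical all_reals.
Set Implicit Arguments. Unset Strict Implicit. Unset Printing Implicit Defensive.
Import Order.TTheory GRing.Theory Num.Theory.
Local Open Scope ring_scope.

Definition psd (R : realType) (n : nat) (H : 'M[R]_n) : Prop :=
  H^T = H /\ forall x : 'cV[R]_n, 0 <= (x^T *m H *m x) 0 0.

Definition alg_mult (R : realType) (n : nat) (H : 'M[R]_n) (a : R) : nat :=
  mup a (char_poly H).

Definition least_eig_simple (R : realType) (n : nat) (H : 'M[R]_n) : Prop :=
  exists l : R, eigenvalue H l /\ (forall b, eigenvalue H b -> l <= b)
                /\ alg_mult H l = 1%N.

Definition eig_list (R : realType) (n : nat) (H : 'M[R]_n) (s : seq R) : Prop :=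
  uniq s /\ forall a : R, eigenvalue H a <-> a \in s.

Definition num_distinct_eigs (R : realType) (n : nat) (H : 'M[R]_n) (k : nat) : Prop :=
  exists s : seq R, eig_list H s /\ size s = k.

Definition sqnorm (R : realType) (n : nat) (a : 'cV[R]_n) : R := (a^T *m a) 0 0.

(* Conditions (i) and (ii) for mu = [mu_1; ...; mu_k] (0-indexed in the seq). *)
Definition cond_mu (R : realType) (n k : nat) (H : 'M[R]_n) (mu : seq R) : Prop :=
  [/\ size mu = k, uniq mu,
      (forall i : nat, (i < k.-1)%N -> (H - (mu`_i)%:M) \notin unitmx) &
      exists alpha : 'cV[R]_n, alpha != 0 /\
        \prod_(i < k.-1) (H - (mu`_i)%:M)
          = ((\prod_(i < k.-1) (mu`_(k.-1) - mu`_i)) / sqnorm alpha)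
              *: (alpha *m alpha^T)
        /\ H *m alpha = mu`_(k.-1) *: alpha].

(* A real symmetric H is unitarily diagonalisable over the complex numbers.
   If l is a simple eigenvalue with eigenvector alpha and mu_1, ..., mu_(k-1)
   enumerate the other eigenvalues, then in an eigenbasis the product
   prod_i (H - mu_i) is diagonal, vanishes on every eigenvalue except l and
   equals prod_i (l - mu_i) there: it is that multiple of the orthogonal
   projection onto the line of alpha.  Conversely, if the product has this
   rank-one form, an eigenvector v whose eigenvalue a avoids mu_1, ..., mu_(k-1)
   satisfies prod_i (a - mu_i) v = (multiple of) alpha, so v is parallel to
   alpha and a = mu_k. *)

From mathcomp Require Import all_boot all_order all_algebra.
From mathcomp Require Import all_classical all_reals.
From mathcomp Require Import complex.
Set Implicit Arguments. Unset Strict Implicit. Unset Printing Implicit Defensive.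
Import Order.TTheory GRing.Theory Num.Theory.
Local Open Scope ring_scope.
Local Open Scope sesquilinear_scope.

Lemma prod_diag_mx (R : comNzRingType) n m (f : 'I_m -> 'rV[R]_n) :
  \prod_(i < m) diag_mx (f i) = diag_mx (\row_j \prod_(i < m) f i 0 j).
Proof.
elim: m f => [|m IHm] f.
  rewrite big_ord0 (_ : \row_j _ = const_mx 1) ?diag_const_mx //.
  by apply/rowP => j; rewrite !mxE big_ord0.
rewrite big_ord_recl IHm -mulmxE mulmx_diag; congr diag_mx.
by apply/rowP => j; rewrite !mxE big_ord_recl.
Qed.

Lemma diag_mx_subr_scalar (R : nzRingType) n (d : 'rV[R]_n) a :
  diag_mx d - a%:M = diag_mx (\row_j (d 0 j - a)).
Proof.
apply/matrixP => i j; rewrite !mxE.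
by case: (i == j); rewrite ?mulr1n ?mulr0n ?subrr.
Qed.

Lemma prod_conjmx (R : comUnitRingType) n (P : 'M[R]_n) m (A : 'I_m -> 'M[R]_n) :
  P \in unitmx ->
  \prod_(i < m) (invmx P *m A i *m P) = invmx P *m (\prod_(i < m) A i) *m P.
Proof.
move=> Pu; elim: m A => [|m IHm] A; first by rewrite !big_ord0 mulmx1 mulVmx.
rewrite !big_ord_recl IHm -!mulmxE !mulmxA.
by rewrite -[_ *m P *m invmx P]mulmxA mulmxV // mulmx1.
Qed.

Lemma conjmx_scalar (R : comUnitRingType) n (P : 'M[R]_n) a :
  P \in unitmx -> invmx P *m a%:M *m P = a%:M.
Proof. by move=> Pu; rewrite mul_mx_scalar -scalemxAl mulVmx // scalemx1. Qed.

Lemma prod_subr_scalar_conj_diag (R : comUnitRingType) n (P : 'M[R]_n)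
    (d : 'rV[R]_n) m (g : 'I_m -> R) : P \in unitmx ->
  \prod_(i < m) (invmx P *m diag_mx d *m P - (g i)%:M)
    = invmx P *m diag_mx (\row_j \prod_(i < m) (d 0 j - g i)) *m P.
Proof.
move=> Pu; transitivity (invmx P *m \prod_(i < m) (diag_mx d - (g i)%:M) *m P).
  rewrite -prod_conjmx //; apply: eq_bigr => i _.
  by rewrite -{1}(conjmx_scalar (g i) Pu) -mulmxBl -mulmxBr.
under eq_bigr => i _ do rewrite diag_mx_subr_scalar.
rewrite prod_diag_mx; congr (_ *m diag_mx _ *m _).
by apply/rowP => j; rewrite !mxE; apply: eq_bigr => i _; rewrite mxE.
Qed.

Lemma char_poly_conj (F : fieldType) n (P A : 'M[F]_n) : P \in unitmx ->
  char_poly (invmx P *m A *m P) = char_poly A.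
Proof.
move=> Pu; pose Pc := @map_mx _ _ (@polyC F) n n.
have PcVP : Pc (invmx P) *m Pc P = 1%:M by rewrite -map_mxM mulVmx // map_mx1.
rewrite /char_poly; have -> : char_poly_mx (invmx P *m A *m P)
    = Pc (invmx P) *m char_poly_mx A *m Pc P.
  rewrite /char_poly_mx !map_mxM mulmxBr mulmxBl; congr (_ - _).
  by rewrite mul_mx_scalar -scalemxAl PcVP scalemx1.
by rewrite !det_mulmx mulrAC -det_mulmx PcVP det1 mul1r.
Qed.

Lemma prod_subr_scalar_eigenvector (R : comNzRingType) n (A : 'M[R]_n)
    (v : 'cV[R]_n) a m (g : 'I_m -> R) :
  A *m v = a *: v ->
  (\prod_(i < m) (A - (g i)%:M)) *m v = (\prod_(i < m) (a - g i)) *: v.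
Proof.
move=> Av; elim: m g => [|m IHm] g; first by rewrite !big_ord0 mul1mx scale1r.
rewrite !big_ord_recl -mulmxE -mulmxA IHm -scalemxAr mulmxBl Av mul_scalar_mx.
by rewrite -scalerBl scalerA mulrC.
Qed.

Lemma map_prod_subr_scalar (R S : comNzRingType) (f : {rmorphism R -> S}) n
    (A : 'M[R]_n) m (g : 'I_m -> R) :
  map_mx f (\prod_(i < m) (A - (g i)%:M))
    = \prod_(i < m) (map_mx f A - (f (g i))%:M).
Proof.
elim: m g => [|m IHm] g; first by rewrite !big_ord0 map_mx1.
by rewrite !big_ord_recl -!mulmxE map_mxM IHm map_mxB map_scalar_mx.
Qed.

Lemma eigenvalue_unitmx (F : fieldType) n (A : 'M[F]_n) a :
  eigenvalue A a = (A - a%:M \notin unitmx).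
Proof. by rewrite /eigenvalue /eigenspace -row_free_unit -kermx_eq0. Qed.

Lemma eigenvalue_colP (F : fieldType) n (A : 'M[F]_n) a :
  reflect (exists2 v : 'cV_n, A *m v = a *: v & v != 0) (eigenvalue A a).
Proof.
have -> : eigenvalue A a = eigenvalue A^T a.
  by rewrite !eigenvalue_unitmx -unitmx_tr linearB /= tr_scalar_mx.
apply: (iffP eigenvalueP) => -[v Av v0]; exists v^T; rewrite ?trmx_eq0 //.
- by rewrite -[A]trmxK -trmx_mul Av linearZ.
- by rewrite -trmx_mul Av linearZ.
Qed.

Lemma diag_eigenvector_delta (R : idomainType) n (d : 'rV[R]_n) (b : 'cV_n) l i0 :
  diag_mx d *m b = l *: b -> (forall j, j != i0 -> d 0 j != l) ->
  b = b i0 0 *: delta_mx i0 0.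
Proof.
move=> Db dl; apply/matrixP => j k; rewrite ord1 !mxE eqxx andbT.
have [->|ji0] := eqVneq j i0; first by rewrite mulr1.
have /matrixP/(_ j 0)/eqP := Db; rewrite mul_diag_mx !mxE -subr_eq0 -mulrBl.
by rewrite mulf_eq0 subr_eq0 (negbTE (dl j ji0)) mulr0 => /eqP.
Qed.

Lemma diag_mx_delta (R : nzRingType) n (r : 'rV[R]_n) i0 :
  (forall j, j != i0 -> r 0 j = 0) -> diag_mx r = r 0 i0 *: delta_mx i0 i0.
Proof.
move=> r0; apply/matrixP => i j; rewrite !mxE.
have [<-|ij] := eqVneq i j.
  by have [->|ii0] := eqVneq i i0; rewrite /= ?mulr1 // r0 // mul0rn mulr0.
rewrite mulr0n; have [eii0|] := eqVneq i i0; last by rewrite mulr0.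
by rewrite -eii0 eq_sym (negbTE ij) mulr0.
Qed.

Lemma unitary_diag_prod_subr_rank_one (C : numClosedFieldType) n
    (P : 'M[C]_n) (d : 'rV[C]_n) (a : 'cV_n) l i0 m (g : 'I_m -> C) :
    P \is unitarymx -> a != 0 -> (invmx P *m diag_mx d *m P) *m a = l *: a ->
    (forall j, (d 0 j == l) = (j == i0)) ->
    (forall j, j != i0 -> exists i, g i = d 0 j) ->
  \prod_(i < m) (invmx P *m diag_mx d *m P - (g i)%:M)
    = ((\prod_(i < m) (l - g i)) / (a^t* *m a) 0 0) *: (a *m a^t*).
Proof.
move=> P_unitary a0 Aa dl gd; have P_unit := unitarymx_unit P_unitary.
set e : 'cV[C]_n := delta_mx i0 0.
have eT : e^t* = e^T by rewrite /e trmx_delta map_delta_mx.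
have eTe : e^T *m e = 1.
  by rewrite trmx_delta mul_delta_mx; apply/matrixP => i j; rewrite !ord1 !mxE.
set b := P *m a; set c := b i0 0.
have aE : a = invmx P *m b by rewrite mulKmx.
have Db : diag_mx d *m b = l *: b.
  by rewrite /b scalemxAr -Aa !mulmxA mulmxV // mul1mx.
have bE : b = c *: e by apply: diag_eigenvector_delta Db _ => j; rewrite dl.
have c0 : c != 0 by apply: contra_neq a0; rewrite aE bE => ->; rewrite scale0r mulmx0.
have aT : a^t* = c^* *: (e^T *m P).
  rewrite aE bE invmx_unitary // -scalemxAr linearZ /= map_mxZ.
  by rewrite trmx_mul map_mxM trmxCK eT.
have aa : a *m a^t* = (c^* * c) *: (invmx P *m (e *m e^T) *m P).
  by rewrite aT aE bE -2!scalemxAr !mulmxA !scalemxAl scalerA.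
have ata : (a^t* *m a) 0 0 = c * c^*.
  rewrite aT aE bE -2!scalemxAr !mulmxA !scalemxAl scalerA -(mulmxA _ P) mulmxV //.
  by rewrite mulmx1 -scalemxAl eTe !mxE mulr1.
have dE : diag_mx (\row_j \prod_(i < m) (d 0 j - g i))
    = (\prod_(i < m) (l - g i)) *: (e *m e^T).
  rewrite trmx_delta mul_delta_mx (diag_mx_delta (i0 := i0)) => [|j /gd [i gi]].
    have /eqP di0 : d 0 i0 == l by rewrite dl.
    by rewrite mxE di0.
  by rewrite mxE (bigD1 i) //= gi subrr mul0r.
rewrite prod_subr_scalar_conj_diag // dE aa ata scalerA [c^* * c]mulrC.
by rewrite divfK ?mulf_neq0 ?conjC_eq0 // -scalemxAr -scalemxAl.
Qed.

Lemma eigenvalue_char_poly_prod (F : fieldType) n (A : 'M[F]_n) (e : 'I_n -> F) x :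
  char_poly A = \prod_(i < n) ('X - (e i)%:P) -> eigenvalue A x = [exists i, e i == x].
Proof.
move=> chiA; rewrite eigenvalue_root_char chiA /root horner_prod.
apply/prodf_eq0/existsP.
  by move=> [i _]; rewrite hornerXsubC subr_eq0 eq_sym => exi; exists i.
by move=> [i /eqP eix]; exists i; rewrite // hornerXsubC eix subrr.
Qed.

Lemma mup_prod_XsubC_eq1 (F : fieldType) n (e : 'I_n -> F) x i0 j :
  mup x (\prod_(i < n) ('X - (e i)%:P)) = 1%N -> e i0 = x -> e j = x -> j = i0.
Proof.
move=> mux ei0 ej; apply/eqP/negPn/negP => ji0.
suff : (2 <= mup x (\prod_(i < n) ('X - (e i)%:P)))%N by rewrite mux.
rewrite mup_geq ?monic_neq0 ?monic_prod_XsubC // (bigD1 i0) // (bigD1 j) //=.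
by rewrite mulrA ei0 ej -expr2 dvdp_mulIl.
Qed.

Section RealSymmetric.
Variables (R : realType) (n : nat) (H : 'M[R]_n).
Hypothesis H_sym : H^T = H.
Local Notation toC := (real_complex R).

Lemma real_sym_spectral : exists (P : 'M[R[i]]_n) (e : 'rV[R]_n),
  P \is unitarymx /\ map_mx toC H = invmx P *m diag_mx (map_mx toC e) *m P.
Proof.
set Hc := map_mx toC H.
have Hc_herm : Hc \is hermsymmx.
  apply: realsym_hermsym.
    by apply/is_hermitianmxP; rewrite expr0 scale1r map_mx_id // /Hc map_trmx H_sym.
  by apply/mxOverP => i j; rewrite mxE; apply/complex_realP; eexists.
exists (spectralmx Hc), (map_mx (@complex.Re R) (spectral_diag Hc)); split.
  exact: spectral_unitarymx.
have -> : map_mx toC (map_mx (@complex.Re R) (spectral_diag Hc)) = spectral_diag Hc.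
  apply/matrixP => i j; rewrite !mxE; apply: RRe_real.
  exact: (mxOverP (hermitian_spectral_diag_real Hc_herm)).
exact/orthomx_spectralP/hermitian_normalmx.
Qed.

Lemma char_poly_unitary_diag (P : 'M[R[i]]_n) (e : 'rV[R]_n) :
  P \is unitarymx -> map_mx toC H = invmx P *m diag_mx (map_mx toC e) *m P ->
  char_poly H = \prod_(i < n) ('X - (e 0 i)%:P).
Proof.
move=> Pu HE; apply: (@map_poly_inj _ _ toC).
rewrite map_char_poly HE char_poly_conj ?unitarymx_unit //.
rewrite char_poly_trig ?diag_mx_is_trig // map_prod_XsubC.
by apply: eq_bigr => i _; rewrite !mxE eqxx mulr1n.
Qed.

Lemma sym_prod_subr_scalar_rank_one (a : 'cV[R]_n) l m (g : 'I_m -> R) :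
    a != 0 -> H *m a = l *: a -> alg_mult H l = 1%N ->
    (forall b, eigenvalue H b -> b != l -> exists i, g i = b) ->
  \prod_(i < m) (H - (g i)%:M)
    = ((\prod_(i < m) (l - g i)) / sqnorm a) *: (a *m a^T).
Proof.
move=> a0 Ha simple_l gH.
have [P [e [Pu HE]]] := real_sym_spectral.
have chiH := char_poly_unitary_diag Pu HE.
have eigE x := eigenvalue_char_poly_prod x chiH.
have /existsP [i0 /eqP ei0] : [exists i, e 0 i == l].
  by rewrite -eigE; apply/eigenvalue_colP; exists a.
have el j : (e 0 j == l) = (j == i0).
  apply/eqP/eqP => [ejl|->//]; apply: mup_prod_XsubC_eq1 ei0 ejl.
  by rewrite -chiH.
have aT : (map_mx toC a)^t* = map_mx toC a^T.
  by apply/matrixP => i j; rewrite !mxE; exact: conjc_real.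
apply: (@map_mx_inj _ _ toC).
rewrite map_prod_subr_scalar HE.
rewrite (unitary_diag_prod_subr_rank_one Pu (a := map_mx toC a) (l := toC l)
  (i0 := i0)).
- have prodC : \prod_(i < m) (toC l - toC (g i)) = toC (\prod_(i < m) (l - g i)).
    by rewrite rmorph_prod; apply: eq_bigr => i _; rewrite rmorphB.
  by rewrite aT map_mxZ fmorph_div -!map_mxM mxE prodC.
- by rewrite map_mx_eq0.
- by rewrite -HE -map_mxM Ha map_mxZ.
- by move=> j; rewrite mxE (inj_eq (@complexI R)) el.
move=> j ji0; have [i gi] : exists i, g i = e 0 j.
  by apply: gH; rewrite ?el // eigE; apply/existsP; exists j.
by exists i; rewrite mxE gi.
Qed.

End RealSymmetric.

Lemma eig_list_cond_mu (R : realType) n (H : 'M[R]_n) k mu :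
  (0 < k)%N -> cond_mu k H mu -> eig_list H mu.
Proof.
move=> k_gt0 [size_mu uniq_mu sing [al [al0 [Qal Hal]]]]; split => // a.
have last_mu : mu`_k.-1 \in mu by rewrite mem_nth // size_mu prednK.
split; last first.
  move=> /(nthP (0 : R)) [i ltik <-]; rewrite size_mu in ltik.
  have [lti|] := ltnP i k.-1; first by rewrite eigenvalue_unitmx sing.
  move=> leki; have -> : i = k.-1.
    by apply/eqP; rewrite eqn_leq leki -ltnS prednK // ltik.
  by apply/eigenvalue_colP; exists al.
move=> /eigenvalue_colP [v Hv v0].
set p := \prod_(i < k.-1) (a - mu`_i).
have [/eqP|p0] := eqVneq p 0.
  rewrite prodf_seq_eq0 => /hasP [i _ /=]; rewrite subr_eq0 => /eqP ->.
  by rewrite mem_nth // size_mu (leq_trans (ltn_ord i)) // leq_pred.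
have Qv := prod_subr_scalar_eigenvector (fun i : 'I_k.-1 => mu`_i) Hv.
have v_al : v = (p^-1 * ((\prod_(i < k.-1) (mu`_k.-1 - mu`_i) / sqnorm al)
                        * (al^T *m v) 0 0)) *: al.
  rewrite Qal -scalemxAl -mulmxA [al^T *m v]mx11_scalar in Qv.
  rewrite mul_mx_scalar scalerA in Qv.
  by rewrite -scalerA Qv scalerA mulVf // scale1r.
suff -> : a = mu`_k.-1 by [].
apply/eqP; apply: contraNT v0 => /negPf amu.
move: Hv; rewrite {1}v_al -scalemxAr Hal scalerA mulrC -scalerA -v_al => /eqP.
by rewrite -subr_eq0 -scalerBl scaler_eq0 subr_eq0 eq_sym amu.
Qed.

Lemma cond_mu_eig_list (R : realType) n (H : 'M[R]_n) s l :
    H^T = H -> eigenvalue H l -> alg_mult H l = 1%N -> eig_list H s ->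
  cond_mu (size s) H (rcons (rem l s) l).
Proof.
move=> H_sym /eigenvalue_colP [al Hal al0] simple_l [uniq_s eig_s].
have l_s : l \in s by apply/eig_s/eigenvalue_colP; exists al.
have s_gt0 : (0 < size s)%N by case: (s) l_s.
set s' := rem l s.
have size_s' : size s' = (size s).-1 by rewrite size_rem.
have mem_s' x : (x \in s') = (x != l) && (x \in s) by rewrite mem_rem_uniq // inE.
have nth_mu i : (i < (size s).-1)%N -> (rcons s' l)`_i = s'`_i.
  by rewrite nth_rcons size_s' => ->.
have last_mu : (rcons s' l)`_(size s).-1 = l by rewrite nth_rcons size_s' ltnn eqxx.
split.
- by rewrite size_rcons size_s' prednK.
- by rewrite rcons_uniq mem_s' eqxx /= rem_uniq.
- move=> i lti; rewrite nth_mu // -eigenvalue_unitmx; apply/eig_s.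
  have : s'`_i \in s' by rewrite mem_nth // size_s'.
  by rewrite mem_s' => /andP [].
exists al; split => //; rewrite last_mu; split => //.
apply: sym_prod_subr_scalar_rank_one => // b /eig_s b_s bl.
have lt_b : (index b s' < (size s).-1)%N by rewrite -size_s' index_mem mem_s' bl.
by exists (Ordinal lt_b); rewrite /= nth_mu // nth_index // mem_s' bl.
Qed.

Theorem corollary4p3 (R : realType) (n : nat) (H : 'M[R]_n) (k : nat) :
  psd H -> least_eig_simple H -> (2 <= k)%N -> (k <= n)%N ->
  (num_distinct_eigs H k <-> exists mu : seq R, cond_mu k H mu) /\
  (forall mu : seq R, cond_mu k H mu -> eig_list H mu).
Proof.
move=> [H_sym _] [l [Hl [_ simple_l]]] k_ge2 _.
have k_gt0 : (0 < k)%N by apply: leq_trans k_ge2.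
split; last by move=> mu; apply: eig_list_cond_mu.
split.
  move=> [s [eig_s <-]].
  by exists (rcons (rem l s) l); apply: cond_mu_eig_list.
move=> [mu cond]; exists mu; split; first exact: eig_list_cond_mu cond.
by case: cond.
Qed.
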